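(* Let $k$ be a positive integer and let $c:\mathbb{Q}^{\beth_\omega}\to\{1,\dots,k\}$ be an arbitrary $k$-colouring. Let $\Pi$ be a finite set of patterns. Then there is a subset $A\subset B$ with $|A|=\aleph_1$ such that for each $\pi\in\Pi$ the set $$\{x\in\mathbb{Q}^{\beth_\omega}: x \text{ lies in the linear span of } A \text{ and has pattern } \pi\}$$ is monochromatic under $c$.
   Context: $\beth_\omega=\sup\{\aleph_0,2^{\aleph_0},2^{2^{\aleph_0}},\dots\}$. For a cardinal $\kappa$, $\mathbb{Q}^\kappa$ denotes the rational vector space of dimension $\kappa$, i.e. the direct sum (not product) of $\kappa$ copies of $\mathbb{Q}$, equipped with a basis $B=\{e_\alpha\}$ indexed by (and well-ordered by) the ordinals less than the least ordinal of cardinality $\kappa$. Every nonzero $x\in\mathbb{Q}^\kappa$ can be written uniquely as $x=\sum_{i=1}^n x_i e_{\alpha_i}$ with $n\ge1$, each $x_i$ a nonzero rational, and $\alpha_1<\alpha_2<\dots<\alpha_n$; the finite sequence $(x_1,x_2,\dots,x_n)$ is called the pattern of $x$, and $n$ is its length. A pattern is any finite nonempty sequence of nonzero rationals. *)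

From HB Require Import structures.
From mathcomp Require Import all_boot all_order all_algebra.
Set Implicit Arguments. Unset Strict Implicit. Unset Printing Implicit Defensive.
Import Order.TTheory GRing.Theory Num.Theory.
Local Open Scope ring_scope.

(* beth_type n has cardinality beth_n : nat, P(nat), P(P(nat)), ... *)
Fixpoint beth_type (n : nat) : Type :=
  match n with
  | 0 => nat
  | S m => beth_type m -> Prop
  end.

(* A type of cardinality beth_omega = sup_n beth_n. *)
Definition beth_omega_type : Type := { n : nat & beth_type n }.

Definition equinumerous (X Y : Type) : Prop :=
  exists f : X -> Y, bijective f.

Definition card_le (X Y : Type) : Prop :=
  exists f : X -> Y, injective f.

Definition strict_well_order (X : Type) (lt : X -> X -> Prop) : Prop :=
  (forall x, ~ lt x x) /\
  (forall x y z, lt x y -> lt y z -> lt x z) /\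
  (forall x y, lt x y \/ x = y \/ lt y x) /\
  well_founded lt.

(* (I, lt) is order-isomorphic to the least ordinal of cardinality beth_omega:
   a well-order of cardinality beth_omega all of whose proper initial segments
   have strictly smaller cardinality. *)
Definition initial_ordinal_beth_omega (I : Type) (lt : I -> I -> Prop) : Prop :=
  strict_well_order lt /\
  equinumerous I beth_omega_type /\
  (forall i : I, ~ card_le I { j : I | lt j i }).

Definition countable_set (X : Type) (A : X -> Prop) : Prop :=
  exists f : X -> nat, forall x y, A x -> A y -> f x = f y -> x = y.

(* |A| = aleph_1 : A is uncountable and admits a well-order all of whose
   proper initial segments are countable. *)
Definition card_aleph1 (X : Type) (A : X -> Prop) : Prop :=
  ~ countable_set A /\
  exists R : {x : X | A x} -> {x : X | A x} -> Prop,
    strict_well_order R /\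
    forall a : {x : X | A x}, countable_set (fun b => R b a).

(* finitely supported functions I -> Q = direct sum of copies of Q *)
Definition finsupp (I : eqType) (x : I -> rat) : Prop :=
  exists s : seq I, forall i, x i != 0 -> i \in s.

Definition vecQ (I : eqType) : Type := { x : I -> rat | finsupp x }.

Definition in_span (I : eqType) (A : I -> Prop) (x : I -> rat) : Prop :=
  exists l : seq (I * rat),
    (forall p, p \in l -> A p.1) /\
    forall i, x i = \sum_(p <- l) (if p.1 == i then p.2 else 0).

Fixpoint increasing (I : Type) (lt : I -> I -> Prop) (l : seq I) : Prop :=
  match l with
  | a :: ((b :: _) as t) => lt a b /\ increasing lt t
  | _ => True
  end.

Definition is_pattern (pi : seq rat) : Prop :=
  (0 < size pi)%N /\ forall q, q \in pi -> q != 0.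

Definition has_pattern (I : eqType) (lt : I -> I -> Prop) (x : I -> rat)
    (pi : seq rat) : Prop :=
  exists l : seq (I * rat),
    [seq p.2 | p <- l] = pi /\
    increasing lt [seq p.1 | p <- l] /\
    (forall p, p \in l -> x p.1 = p.2) /\
    (forall i, i \notin [seq p.1 | p <- l] -> x i = 0).

(* Erdos-Rado: if |X| > beth_m, every countable colouring of the increasing
   (m+1)-tuples of X has an uncountable homogeneous subset.  The inductive step
   is the tree argument: were every branch of the Erdos-Rado tree of X of size
   at most beth_m, coding the coloured branches would inject X into a power set
   of a set of size beth_m.

   As |I| = beth_omega exceeds every beth_m, colour each increasing (N+1)-tuple
   of indices, N the largest pattern length, by the list of colours of the
   vectors of pattern pi supported on its first |pi| indices.  A homogeneous
   uncountable set, cut down to its points with countably many predecessors,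
   has size aleph_1, and each of its increasing |pi|-tuples extends to an
   (N+1)-tuple, so every pattern class in its span is monochromatic. *)

From HB Require Import structures.
From mathcomp Require Import all_boot all_order all_algebra.
From Stdlib Require Import ClassicalEpsilon Classical FunctionalExtensionality.
From Stdlib Require Import PropExtensionality ProofIrrelevance Wellfounded.
Set Implicit Arguments. Unset Strict Implicit. Unset Printing Implicit Defensive.

Definition inj_on (T B : Type) (P : T -> Prop) (g : T -> B) : Prop :=
  forall x y, P x -> P y -> g x = g y -> x = y.

(* [embeds B X] says |X| <= |B|; [embeds nat X] is [countable_set X]. *)
Definition embeds (T : Type) (B : Type) (X : T -> Prop) : Prop :=
  exists g : T -> B, inj_on X g.

Lemma embeds_sub (T B : Type) (X Y : T -> Prop) :
  (forall x, X x -> Y x) -> embeds B Y -> embeds B X.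
Proof. by move=> hXY [g hg]; exists g => x y hx hy; apply: hg; apply: hXY. Qed.

Lemma exists_of_not_embeds (T B : Type) (b : B) (X : T -> Prop) :
  ~ embeds B X -> exists x, X x.
Proof.
move=> hX; apply: NNPP => hn; apply: hX; exists (fun _ => b) => x y hx.
by case: hn; exists x.
Qed.

Definition image_set (P Q : Type) (j : P -> Q) (S : P -> Prop) : Q -> Prop :=
  fun q => exists2 p, j p = q & S p.

Lemma image_set_inj (P Q : Type) (j : P -> Q) :
  injective j -> injective (image_set j).
Proof.
move=> hj S S' eS; apply: functional_extensionality => p.
have image_j (S0 : P -> Prop) : image_set j S0 (j p) <-> S0 p.
  by split=> [[p' /hj ->]|]; last exists p.
by apply: propositional_extensionality; rewrite -[S p]image_j -[S' p]image_j eS.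
Qed.

Lemma cantor (B : Type) : ~ card_le (B -> Prop) B.
Proof.
move=> [g hg]; pose D b := exists2 S, g S = b & ~ S b.
have [hD|hD] := classic (D (g D)); last by apply: (hD); exists D.
by case: (hD) => S /hg -> /(_ hD).
Qed.

Lemma beth_not_embeds (I : Type) (m : nat) :
  card_le beth_omega_type I -> ~ embeds (beth_type m) (fun _ : I => True).
Proof.
move=> [h hh] [g hg]; apply: (@cantor (beth_type m)).
exists (fun S => g (h (existT _ m.+1 S))) => S S' /(hg _ _ Logic.I Logic.I) /hh eS.
exact: (Eqdep_dec.inj_pair2_eq_dec _ PeanoNat.Nat.eq_dec _ _ _ _ eS).
Qed.

Definition seq_coding (L : Type) : Prop :=
  exists (i : nat -> L) (q : seq L -> L), injective i /\ injective q.

Lemma seq_coding_pow (B : Type) : seq_coding B -> seq_coding (B -> Prop).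
Proof.
(* A list of subsets of [B] is recorded by its length and its membership relation,
   a subset [T L] of [nat + nat * B], and [nat + nat * B] injects into [B]. *)
move=> [i [q [hi hq]]]; exists (fun n b => b = i n).
pose j (x : nat + nat * B) := match x with
  | inl k => q [:: i 0; i k] | inr (k, b) => q [:: i 1; i k; b] end.
have hj : injective j.
  by case=> [k|[k b]] [k'|[k' b']] /hq //= [] /hi -> // ->.
pose T (L : seq (B -> Prop)) (x : nat + nat * B) := match x with
  | inl k => k = size L | inr (k, b) => nth (fun _ => False) L k b end.
have hT : injective T.
  move=> L L' eT; have eL : size L = size L'.
    by have /= <- : T L (inl (size L)) = T L' (inl (size L)) by rewrite eT.
  apply: (eq_from_nth (x0 := fun _ => False)) => // k _.
  apply: functional_extensionality => b.
  exact: (congr1 (fun F => F (inr (k, b))) eT).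
exists (fun L => image_set j (T L)); split.
- by move=> n n' /(congr1 (fun F => F (i n))) /= en; apply: hi; rewrite -en.
- by move=> L L' /(image_set_inj hj); exact: hT.
Qed.

Lemma seq_coding_beth (m : nat) : seq_coding (beth_type m).
Proof.
elim: m => [|m ih]; last exact: seq_coding_pow.
by exists id, pickle; split=> //; exact: (pcan_inj (@pickleK _)).
Qed.

Lemma uncountable_fibre (I : Type) (T : countType) (X : I -> Prop) (g : I -> T) :
  ~ embeds nat X -> exists t, ~ embeds nat (fun x => X x /\ g x = t).
Proof.
move=> hX; apply: NNPP => hn.
have /choice [G hG] : forall t, exists G : I -> nat, inj_on (fun x => X x /\ g x = t) G.
  by move=> t; apply: NNPP => ht; apply: hn; exists t => -[G hG]; apply: ht; exists G.
apply: hX; exists (fun x => pickle (g x, G (g x) x)) => x y hx hy.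
move/(pcan_inj (@pickleK _)) => [exy]; rewrite exy => /hG; apply; by split.
Qed.

Section WellOrder.
Variables (I : eqType) (lt : I -> I -> Prop).
Hypotheses (lt_irr : forall x, ~ lt x x)
  (lt_trans : forall x y z, lt x y -> lt y z -> lt x z)
  (lt_total : forall x y, lt x y \/ x = y \/ lt y x)
  (lt_wf : well_founded lt).

Lemma increasing_cons (s : seq I) a :
  increasing lt (a :: s) <-> increasing lt s /\ (forall w, w \in s -> lt a w).
Proof.
elim: s a => [|b t ih] a /=; first by split.
split.
- move=> [hab hbt]; split=> // w; rewrite in_cons => /orP [/eqP ->//|wt].
  have [_ h] := (ih b).1 hbt; exact: lt_trans hab (h w wt).
- by move=> [hbt h]; split=> //; apply: h; exact: mem_head.
Qed.

Lemma increasing_rcons (s : seq I) z :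
  increasing lt (rcons s z) <-> increasing lt s /\ (forall w, w \in s -> lt w z).
Proof.
elim: s => [|a s ih]; first by split.
rewrite rcons_cons; split.
- move/increasing_cons=> [/ih [hs hz] ha]; split.
  + apply/increasing_cons; split=> // w ws.
    by apply: ha; rewrite mem_rcons in_cons ws orbT.
  + move=> w; rewrite in_cons => /orP [/eqP ->|ws]; last exact: hz.
    by apply: ha; rewrite mem_rcons mem_head.
- move=> [/increasing_cons [hs ha] hz]; apply/increasing_cons; split.
  + by apply/ih; split=> // w ws; apply: hz; rewrite in_cons ws orbT.
  + move=> w; rewrite mem_rcons in_cons => /orP [/eqP ->|ws]; last exact: ha.
    by apply: hz; rewrite mem_head.
Qed.

Definition incr_tuple (A : I -> Prop) (n : nat) (s : seq I) : Prop :=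
  [/\ forall w, w \in s -> A w, increasing lt s & size s = n].

Definition homogeneous (T : Type) (A : I -> Prop) (n : nat) (f : seq I -> T) : Prop :=
  forall s t, incr_tuple A n s -> incr_tuple A n t -> f s = f t.

Lemma incr_tuple_sub (A B : I -> Prop) n s :
  (forall w, w \in s -> A w -> B w) -> incr_tuple A n s -> incr_tuple B n s.
Proof. by move=> hAB [hA hs hsz]; split=> // w ws; apply/hAB/hA. Qed.

Lemma homogeneous_sub (T : Type) (A B : I -> Prop) n (f : seq I -> T) :
  (forall x, A x -> B x) -> homogeneous B n f -> homogeneous A n f.
Proof. by move=> hAB hf s t hs ht; apply: hf; apply: incr_tuple_sub (fun w _ => hAB w) _. Qed.

Lemma incr_tuple_rcons (A : I -> Prop) n s y :
  incr_tuple A n.+1 (rcons s y) <->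
  [/\ incr_tuple A n s, A y & forall w, w \in s -> lt w y].
Proof.
split.
- move=> [hA /increasing_rcons [hs hlt]]; rewrite size_rcons => -[hsz].
  split=> //; last by apply: hA; rewrite mem_rcons mem_head.
  by split=> // w ws; apply: hA; rewrite mem_rcons in_cons ws orbT.
- move=> [[hA hs hsz] hy hlt]; split; last by rewrite size_rcons hsz.
  + by move=> w; rewrite mem_rcons in_cons => /orP [/eqP ->|/hA].
  + exact/increasing_rcons.
Qed.

Lemma inj_on_map (B : Type) (P : I -> Prop) (g : I -> B) (s1 s2 : seq I) :
  inj_on P g -> (forall w, w \in s1 -> P w) -> (forall w, w \in s2 -> P w) ->
  map g s1 = map g s2 -> s1 = s2.
Proof.
move=> hg; elim: s1 s2 => [|a s1 ih] [|b s2] //= h1 h2 [eab es].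
have -> : a = b by apply: hg eab; [apply: h1 | apply: h2]; exact: mem_head.
congr cons; apply: ih es.
- by move=> w ws; apply: h1; rewrite in_cons ws orbT.
- by move=> w ws; apply: h2; rewrite in_cons ws orbT.
Qed.

Section ErdosRadoTree.
Variables (T : countType) (n : nat) (X : I -> Prop) (f : seq I -> T).

(* [tree_lt z x]: [z] lies below [x] in the Erdos-Rado tree of [X] coloured by
   [f], i.e. [z < x] and every increasing [n]-tuple of tree-predecessors of [z]
   gets the same colour when followed by [z] as when followed by [x]. *)
Definition tree_body (x z : I) (rec : forall w, lt w z -> Prop) : Prop :=
  X z /\ lt z x /\ forall s : seq I, (forall w, w \in s -> exists h : lt w z, rec w h) ->
    increasing lt s -> size s = n -> f (rcons s z) = f (rcons s x).

Definition tree_lt (z x : I) : Prop := Fix lt_wf (fun _ => Prop) (tree_body x) z.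

Lemma tree_ltE z x : tree_lt z x <-> X z /\ lt z x /\ forall s,
  incr_tuple (fun w => lt w z /\ tree_lt w x) n s -> f (rcons s z) = f (rcons s x).
Proof.
rewrite /tree_lt Fix_eq => [|w g h e]; last first.
  have -> // : g = h.
  by apply: functional_extensionality_dep => u; apply: functional_extensionality_dep.
rewrite /tree_body; split=> -[hX [hzx hs]]; do 2!split=> //.
- by move=> s [hin hinc hsz]; apply: hs => // w /hin [hw hr]; exists hw.
- by move=> s hin hinc hsz; apply: hs; split=> // w /hin [hw hr].
Qed.

Lemma tree_lt_X z x : tree_lt z x -> X z.
Proof. by move/tree_ltE => []. Qed.

Lemma tree_lt_lt z x : tree_lt z x -> lt z x.
Proof. by move/tree_ltE => [_ []]. Qed.

Lemma tree_lt_below z x : tree_lt z x -> forall w, tree_lt w z <-> tree_lt w x /\ lt w z.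
Proof.
move=> hzx w; elim/(well_founded_ind lt_wf): w => w ih.
have [_ [ltzx hz]] := (tree_ltE z x).1 hzx.
split.
- move=> hwz; have [hXw [ltwz hw]] := (tree_ltE w z).1 hwz.
  split=> //; apply/tree_ltE; split=> //; split=> [|s hs]; first exact: lt_trans ltwz ltzx.
  rewrite hw; last first.
    by apply: incr_tuple_sub hs => u _ [huw hux]; split=> //; apply/ih => //; split=> //;
      exact: lt_trans huw ltwz.
  by apply: hz; apply: incr_tuple_sub hs => u _ [huw hux]; split=> //; exact: lt_trans huw ltwz.
- move=> [hwx ltwz]; have [hXw [ltwx hw]] := (tree_ltE w x).1 hwx.
  apply/tree_ltE; split=> //; split=> // s hs.
  rewrite hw; last by apply: incr_tuple_sub hs => u _ [huw /(ih u huw) []].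
  symmetry; apply: hz; apply: incr_tuple_sub hs => u _ [huw /(ih u huw) [hux _]].
  by split=> //; exact: lt_trans huw ltwz.
Qed.

Definition tree_le (z x : I) : Prop := tree_lt z x \/ z = x.

Lemma tree_le_below z x : tree_le z x -> forall w, tree_lt w z <-> tree_le w x /\ lt w z.
Proof.
case=> [hzx|->] w.
- rewrite (tree_lt_below hzx w).
  split=> [[hwx ltwz]|[[hwx|ewx] ltwz]] //; first by split=> //; left.
  by exfalso; apply: (@lt_irr z); apply: lt_trans (tree_lt_lt hzx) _; rewrite -ewx.
- split=> [hwx|[[hwx|->] ltxx]] //; first by split; [left | exact: tree_lt_lt hwx].
  by case: (lt_irr ltxx).
Qed.

Lemma tree_le_X z x : X x -> tree_le z x -> X z.
Proof. by move=> hx [/tree_lt_X|->]. Qed.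

Definition end_homogeneous (A : I -> Prop) : Prop :=
  forall s y y', incr_tuple A n.+1 (rcons s y) -> incr_tuple A n.+1 (rcons s y') ->
    f (rcons s y) = f (rcons s y').

Lemma tree_end_homogeneous x : end_homogeneous (tree_lt^~ x).
Proof.
move=> s y y' /incr_tuple_rcons [hs hy hsy] /incr_tuple_rcons [_ hy' hsy'].
have [_ [_ ey]] := (tree_ltE y x).1 hy; have [_ [_ ey']] := (tree_ltE y' x).1 hy'.
have below z : (forall w, w \in s -> lt w z) ->
    incr_tuple (fun w => lt w z /\ tree_lt w x) n s.
  by move=> hz; apply: incr_tuple_sub hs => w ws hw; split=> //; exact: hz.
by rewrite (ey _ (below _ hsy)) (ey' _ (below _ hsy')).
Qed.

Definition branch_code (L : Type) (E : I -> I -> L) (x : I) (p : seq L * T) : Prop :=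
  exists s, [/\ forall u, u \in s -> tree_le u x, increasing lt s & p = (map (E x) s, f s)].

Lemma branch_code_transfer (L : Type) (E : I -> I -> L) x x' s :
  branch_code E x = branch_code E x' ->
  (forall u, u \in s -> tree_le u x) -> increasing lt s ->
  exists s', [/\ forall u, u \in s' -> tree_le u x', increasing lt s',
                 map (E x) s = map (E x') s' & f s = f s'].
Proof.
move=> hc hs hinc.
have : branch_code E x' (map (E x) s, f s) by rewrite -hc; exists s.
by case=> s' [hs' hinc' [-> ->]]; exists s'.
Qed.

Lemma branch_code_image (L : Type) (E : I -> I -> L) x x' z :
  branch_code E x = branch_code E x' -> tree_le z x ->
  exists z', tree_le z' x' /\ E x z = E x' z'.
Proof.
move=> hc hz.
have hs u : u \in [:: z] -> tree_le u x by rewrite inE => /eqP ->.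
have [s' [hs' _ em _]] := branch_code_transfer hc hs Logic.I.
case: s' em hs' => [|z' []] // [ez] hs'.
by exists z'; split=> //; apply: hs'; rewrite mem_head.
Qed.

Lemma branch_code_pair (L : Type) (E : I -> I -> L) x x' z w :
  branch_code E x = branch_code E x' -> tree_le z x -> tree_le w x -> lt z w ->
  exists z' w', [/\ tree_le z' x', tree_le w' x', lt z' w', E x z = E x' z' & E x w = E x' w'].
Proof.
move=> hc hz hw hzw.
have hs u : u \in [:: z; w] -> tree_le u x by rewrite !inE => /orP [] /eqP ->.
have [s' [hs' hinc em _]] := branch_code_transfer hc hs (conj hzw Logic.I).
case: s' em hs' hinc => [|z' [|w' []]] // [ez ew] hs' [hzw' _].
by exists z', w'; split=> //; apply: hs'; rewrite !inE eqxx ?orbT.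
Qed.

Section BranchCodeInjective.
Variables (L : Type) (E : I -> I -> L) (x x' : I).
Hypotheses (hXx : X x) (hXx' : X x')
  (hE : inj_on (tree_le^~ x) (E x)) (hE' : inj_on (tree_le^~ x') (E x'))
  (hc : branch_code E x = branch_code E x').

Lemma branch_code_below z z' : tree_le z x -> tree_le z' x' -> E x z = E x' z' ->
  (forall w, lt w z -> tree_le w x -> tree_le w x' /\ E x w = E x' w) ->
  forall w, tree_lt w z <-> tree_lt w z'.
Proof.
move=> hz hz' ez ih w; rewrite (tree_le_below hz) (tree_le_below hz'); split.
- move=> [hw ltwz]; have [hw' ew] := ih w ltwz hw.
  have [w1 [z1 [hw1 hz1 lt1 ew1 ez1]]] := branch_code_pair hc hw hz ltwz.
  have -> : w = w1 by apply: hE' hw' hw1 _; rewrite -ew ew1.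
  by have -> : z' = z1 by apply: hE' hz' hz1 _; rewrite -ez ez1.
- move=> [hw' ltwz'].
  have [w2 [z2 [hw2 hz2 lt2 ew2 ez2]]] := branch_code_pair (esym hc) hw' hz' ltwz'.
  have ez2z : z2 = z by apply: hE hz2 hz _; rewrite -ez2 ez.
  subst z2; have [hw2' ew2'] := ih w2 lt2 hw2.
  by have -> : w = w2 by apply: hE' hw' hw2' _; rewrite ew2 ew2'.
Qed.

Lemma branch_code_colour z z' : tree_le z x -> tree_le z' x' -> E x z = E x' z' ->
  (forall w, lt w z -> tree_le w x -> tree_le w x' /\ E x w = E x' w) ->
  forall s, incr_tuple (tree_lt^~ z) n s -> f (rcons s z) = f (rcons s z').
Proof.
move=> hz hz' ez ih s [hs hinc _].
have hsx u : u \in s -> tree_le u x /\ lt u z by move/hs/(tree_le_below hz).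
have hsz u : u \in rcons s z -> tree_le u x.
  by rewrite mem_rcons inE => /orP [/eqP ->|/hsx []].
have hincz : increasing lt (rcons s z).
  by apply/increasing_rcons; split=> // u /hsx [].
have [s' [hs' _ em ->]] := branch_code_transfer hc hsz hincz.
congr f; apply: (inj_on_map hE') => //.
- move=> u; rewrite mem_rcons inE => /orP [/eqP -> //|/hsx [hu ltuz]].
  exact: (ih u ltuz hu).1.
- rewrite -em !map_rcons ez; congr rcons.
  by apply/eq_in_map => u /hsx [hu ltuz]; exact: (ih u ltuz hu).2.
Qed.

(* [z] and the point [z'] with the same code have the same tree-predecessors and
   colours, so neither lies below the other in the tree. *)
Lemma branch_code_agree z : tree_le z x -> tree_le z x' /\ E x z = E x' z.
Proof.
elim/(well_founded_ind lt_wf): z => z ih hz.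
have [z' [hz' ez]] := branch_code_image hc hz.
have same := branch_code_below hz hz' ez ih.
have colour := branch_code_colour hz hz' ez ih.
have hXz : X z := tree_le_X hXx hz.
have hXz' : X z' := tree_le_X hXx' hz'.
have [ltzz'|[ezz'|ltz'z]] := lt_total z z'; [exfalso | by subst z' | exfalso].
- have : tree_lt z z'.
    apply/tree_ltE; split=> //; split=> // s hs; apply: colour.
    by apply: incr_tuple_sub hs => u _ [_ /same].
  by move/same/tree_lt_lt/lt_irr.
- have : tree_lt z' z.
    apply/tree_ltE; split=> //; split=> // s hs; symmetry; apply: colour.
    by apply: incr_tuple_sub hs => u _ [].
  by move/same/tree_lt_lt/lt_irr.
Qed.

End BranchCodeInjective.

Lemma branch_code_inj (L : Type) (E : I -> I -> L) x x' :
  X x -> X x' -> inj_on (tree_le^~ x) (E x) -> inj_on (tree_le^~ x') (E x') ->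
  branch_code E x = branch_code E x' -> x = x'.
Proof.
move=> hx hx' hE hE' hc.
have [[ltxx'|//] _] := branch_code_agree hx hx' hE hE' hc (or_intror erefl).
have [[ltx'x|//] _] := branch_code_agree hx' hx hE' hE (esym hc) (or_intror erefl).
by case: (lt_irr (lt_trans (tree_lt_lt ltxx') (tree_lt_lt ltx'x))).
Qed.

(* If every branch embeds into [L], branch codes embed [X] into [L -> Prop]. *)
Lemma end_homogeneous_subset (L : Type) : seq_coding L -> ~ embeds (L -> Prop) X ->
  exists Y, [/\ forall y, Y y -> X y, ~ embeds L Y & end_homogeneous Y].
Proof.
move=> [i [q [hi hq]]] hX; apply: NNPP => hY.
have small x : X x -> embeds L (tree_lt^~ x).
  move=> hx; apply: NNPP => hnot; apply: hY; exists (tree_lt^~ x).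
  by split=> // [y /tree_lt_X|]; last exact: tree_end_homogeneous.
have /choice [E hE] : forall x, exists e : I -> L, X x -> inj_on (tree_le^~ x) e.
  move=> x; have [hx|hx] := classic (X x); last by exists (fun _ => i 0%N) => /hx.
  have [g hg] := small x hx.
  exists (fun z => if z == x then q [::] else q [:: g z]) => _ z w hz hw.
  case: eqP => [->|nzx]; case: eqP => [->|nwx] // /hq // [].
  by apply: hg; [case: hz | case: hw].
pose code (p : seq L * T) := q (i (pickle p.2) :: p.1).
have code_inj : injective code.
  by move=> [l t] [l' t'] /hq [/hi /(pcan_inj (@pickleK _)) -> ->].
apply: hX; exists (fun x => image_set code (branch_code E x)) => x x' hx hx'.
by move/(image_set_inj code_inj); exact: branch_code_inj hx hx' (hE x hx) (hE x' hx').
Qed.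

End ErdosRadoTree.

Lemma erdos_rado (T : countType) (m : nat) (X : I -> Prop) (f : seq I -> T) :
  ~ embeds (beth_type m) X ->
  exists H, [/\ forall x, H x -> X x, ~ embeds nat H & homogeneous H m.+1 f].
Proof.
elim: m X f => [|m ih] X f hX.
  have [t ht] := uncountable_fibre (fun x => f [:: x]) hX.
  exists (fun x => X x /\ f [:: x] = t); split=> [x []//|//|s s' [hs _ szs] [hs' _ szs']].
  case: s hs szs => [|a []] //= hs _; case: s' hs' szs' => [|b []] //= hs' _.
  by have [_ ->] := hs a (mem_head _ _); have [_ ->] := hs' b (mem_head _ _).
have [b _] := seq_coding_beth m.
have [Y [hYX hY hend]] := end_homogeneous_subset m.+1 f (seq_coding_beth m) hX.
have [y0 _] := exists_of_not_embeds (b 0%N) hY.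
(* By end-homogeneity, on increasing (m+2)-tuples of [Y] the colour [f] only
   depends on the first m+1 entries. *)
pose top (s : seq I) := epsilon (inhabits y0) (fun y => Y y /\ forall w, w \in s -> lt w y).
have [H [hHY hH homH]] := ih Y (fun s => f (rcons s (top s))) hY.
exists H; split=> [x /hHY /hYX //|//|].
have end_top s y : incr_tuple H m.+2 (rcons s y) -> f (rcons s y) = f (rcons s (top s)).
  move=> /incr_tuple_rcons [hs hy hsy].
  have [htop hstop] : Y (top s) /\ forall w, w \in s -> lt w (top s).
    apply: (epsilon_spec (inhabits y0) (fun y => Y y /\ forall w, w \in s -> lt w y)).
    by exists y; split=> //; exact: hHY.
  have hsY : incr_tuple Y m.+1 s by apply: incr_tuple_sub hs => w _ /hHY.
  by apply: hend; apply/incr_tuple_rcons; split=> //; exact: hHY.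
move=> s t; case/lastP: s => [[_ _ //]|s a hs]; case/lastP: t => [[_ _ //]|t b' ht].
rewrite (end_top _ _ hs) (end_top _ _ ht); apply: homH.
- by case/incr_tuple_rcons: hs.
- by case/incr_tuple_rcons: ht.
Qed.

Lemma aleph1_subset (X : I -> Prop) : ~ embeds nat X ->
  exists A, [/\ forall x, A x -> X x, ~ embeds nat A &
                forall a, A a -> embeds nat (fun z => A z /\ lt z a)].
Proof.
move=> hX; exists (fun x => X x /\ embeds nat (fun y => X y /\ lt y x)).
split=> [x []//||a [_ ha]]; last by apply: embeds_sub ha => z [[hz _] hza].
move=> hA; apply: hX; apply: embeds_sub (hA) => x.
elim/(well_founded_ind lt_wf): x => x ih hx; split=> //.
by apply: embeds_sub hA => y [hy hyx]; exact: ih.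
Qed.

Section CountableSegments.
Variables (A : I -> Prop).
Hypotheses (hA : ~ embeds nat A)
  (hseg : forall a, A a -> embeds nat (fun z => A z /\ lt z a)).

Lemma exists_above a : A a -> exists y, A y /\ lt a y.
Proof.
move=> ha; have [g hg] := hseg ha; apply: NNPP => hn; apply: hA.
exists (fun z => if z == a then 0%N else (g z).+1) => x x' hx hx'.
have below z : A z -> z <> a -> A z /\ lt z a.
  move=> hz nza; split=> //; case: (lt_total z a) => [//|[//|haz]].
  by case: hn; exists z.
case: eqP => [->|nxa]; case: eqP => [->|nx'a] // [] /hg; apply; exact: below.
Qed.

Lemma incr_tuple_extend k m s : incr_tuple A m s -> exists r, incr_tuple A (m + k) (s ++ r).
Proof.
elim: k m s => [|k ih] m s hs; first by exists [::]; rewrite cats0 addn0.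
have [y [hy hsy]] : exists y, A y /\ forall w, w \in s -> lt w y.
  case/lastP: s hs => [_|s a [hsa /increasing_rcons [_ hlt] _]].
    by have [y hy] := exists_of_not_embeds 0%N hA; exists y.
  have [y [hy hay]] : exists y, A y /\ lt a y.
    by apply: exists_above; apply: hsa; rewrite mem_rcons mem_head.
  exists y; split=> // w; rewrite mem_rcons inE => /orP [/eqP -> //|/hlt hwa].
  exact: lt_trans hwa hay.
have hsy' : incr_tuple A m.+1 (rcons s y) by apply/incr_tuple_rcons.
have [r hr] := ih m.+1 (rcons s y) hsy'.
by exists (y :: r); rewrite -cat_rcons addnS -addSn.
Qed.

Lemma homogeneous_take (T : Type) (h : seq I -> T) m N : (m <= N)%N ->
  homogeneous A N (fun s => h (take m s)) -> homogeneous A m h.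
Proof.
move=> hmN hom s t hs ht.
have [r hr] := incr_tuple_extend (N - m) hs.
have [r' hr'] := incr_tuple_extend (N - m) ht.
rewrite subnKC // in hr hr'.
have [_ _ szs] := hs; have [_ _ szt] := ht.
by have := hom _ _ hr hr'; rewrite !take_size_cat.
Qed.

Lemma card_aleph1_of_segments : card_aleph1 A.
Proof.
split; first exact: hA.
exists (fun a b : {x | A x} => lt (proj1_sig a) (proj1_sig b)); split.
  split; first by move=> a; exact: lt_irr.
  split; first by move=> a b d; exact: lt_trans.
  split; last exact: (wf_inverse_image _ _ lt (@proj1_sig _ _) lt_wf).
  move=> [a ha] [b hb] /=; case: (lt_total a b) => [|[eab|]]; [by left | | by right; right].
  by right; left; subst b; rewrite (proof_irrelevance _ ha hb).
move=> [a ha]; have [g hg] := hseg ha.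
exists (fun b : {x | A x} => g (proj1_sig b)) => [[b hb] [b' hb']] /= hlt hlt'.
move/(hg b b' (conj hb hlt) (conj hb' hlt')) => eb.
by subst b'; rewrite (proof_irrelevance _ hb hb').
Qed.

End CountableSegments.

End WellOrder.

Local Open Scope ring_scope.

Definition pattern_on (I : eqType) (pi : seq rat) (s : seq I) (x : I -> rat) : Prop :=
  exists l : seq (I * rat), [/\ [seq p.2 | p <- l] = pi, [seq p.1 | p <- l] = s,
    forall p, p \in l -> x p.1 = p.2 & forall i, i \notin s -> x i = 0].

Lemma pattern_on_inj (I : eqType) pi (s : seq I) (x y : I -> rat) :
  pattern_on pi s x -> pattern_on pi s y -> x = y.
Proof.
have zipE (l : seq (I * rat)) :
    [seq p.2 | p <- l] = pi -> [seq p.1 | p <- l] = s -> l = zip s pi.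
  by move=> <- <-; rewrite zip_unzip.
move=> [l [l2 l1 hx x0]] [l' [l2' l1' hy y0]]; apply: functional_extensionality => i.
have [his|his] := boolP (i \in s); last by rewrite x0 ?y0.
rewrite -l1 in his; case/mapP: his => p pl ->.
by rewrite hx // hy // (zipE _ l2' l1') -(zipE _ l2 l1).
Qed.

Lemma vecQ_inj (I : eqType) (x y : vecQ I) : proj1_sig x = proj1_sig y -> x = y.
Proof. by case: x y => x hx [y hy] /= exy; subst y; rewrite (proof_irrelevance _ hx hy). Qed.

Lemma finsupp0 (I : eqType) : finsupp (fun _ : I => 0 : rat).
Proof. by exists [::] => i; rewrite eqxx. Qed.

(* The colour of the unique vector with pattern [pi] on [s]; junk if there is none. *)
Definition pattern_colour (I : eqType) (C : Type) (c : vecQ I -> C)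
    (pi : seq rat) (s : seq I) : C :=
  c (epsilon (inhabits (exist _ _ (finsupp0 I)))
             (fun x : vecQ I => pattern_on pi s (proj1_sig x))).

Lemma pattern_colourE (I : eqType) (C : Type) (c : vecQ I -> C) pi s (x : vecQ I) :
  pattern_on pi s (proj1_sig x) -> pattern_colour c pi s = c x.
Proof.
move=> hx; rewrite /pattern_colour; congr c; apply: vecQ_inj; apply: (pattern_on_inj _ hx).
exact: (epsilon_spec _ (fun y : vecQ I => pattern_on pi s (proj1_sig y)) (ex_intro _ x hx)).
Qed.

Lemma span_pattern_support (I : eqType) (lt : I -> I -> Prop) (A : I -> Prop) pi
    (x : I -> rat) :
  (forall q, q \in pi -> q != 0) -> in_span A x -> has_pattern lt x pi ->
  exists s, pattern_on pi s x /\ incr_tuple lt A (size pi) s.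
Proof.
move=> hnz [l' [hl'A hsum]] [l [epi [hinc [hval hzero]]]].
exists [seq p.1 | p <- l]; split; first by exists l.
split=> //; last by rewrite -epi !size_map.
move=> _ /mapP [p pl ->]; apply: NNPP => hnA.
have hp0 : x p.1 != 0 by rewrite hval //; apply: hnz; rewrite -epi; exact: map_f.
apply: (negP hp0); apply/eqP; rewrite hsum big1_seq // => q /andP [_ ql].
by case: eqP => // eq1; case: hnA; rewrite -eq1; exact: hl'A.
Qed.

Theorem lemma1 (I : eqType) (lt : I -> I -> Prop)
    (hI : initial_ordinal_beth_omega lt)
    (k : nat) (hk : (0 < k)%N) (c : vecQ I -> 'I_k)
    (Pi : seq (seq rat)) (hPi : forall pi, pi \in Pi -> is_pattern pi) :
  exists A : I -> Prop,
    card_aleph1 A /\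
    forall pi, pi \in Pi ->
      forall x y : vecQ I,
        in_span A (proj1_sig x) -> has_pattern lt (proj1_sig x) pi ->
        in_span A (proj1_sig y) -> has_pattern lt (proj1_sig y) pi ->
        c x = c y.
Proof.
have [[irr [tr [tot wf]]] [[h [h' _ hh']] _]] := hI.
pose N := \max_(pi <- Pi) size pi.
pose F s := [seq pattern_colour c pi (take (size pi) s) | pi <- Pi].
have hbeth : ~ embeds (beth_type N) (fun _ : I => True).
  by apply: beth_not_embeds; exists h'; exact: can_inj hh'.
have [H [_ hH homF]] := erdos_rado irr tr tot wf F hbeth.
have [A [hAH hA hseg]] := aleph1_subset wf hH.
exists A; split; first exact: card_aleph1_of_segments.
move=> pi hpi x y hx hxp hy hyp.
have [s [hxs hs]] := span_pattern_support (proj2 (hPi pi hpi)) hx hxp.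
have [t [hyt ht]] := span_pattern_support (proj2 (hPi pi hpi)) hy hyp.
rewrite -(pattern_colourE c hxs) -(pattern_colourE c hyt).
have hpiN : (size pi <= N.+1)%N by apply/leqW/leq_bigmax_seq.
apply: (homogeneous_take tr tot hA hseg hpiN _ hs ht) => u v hu hv.
have := congr1 (fun L => nth (pattern_colour c pi [::]) L (index pi Pi))
                (homogeneous_sub hAH homF hu hv).
by rewrite /F /= !(nth_map [::]) ?index_mem // nth_index.
Qed.
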